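(* Let $G$ be an equimatchable graph and let $k,\ell$ be integers with $1\leq \ell<k\leq\nu(G)$. Then $I(G)^{[k]}:I(G)^{[\ell]}=I(G)^{[k]}$.
   Context: A finite simple graph is equimatchable if every maximal (by inclusion) matching is a maximum matching. Vertices are identified with variables of $S=K[x_1,\ldots,x_n]$ ($K$ a field), edges with degree-2 monomials. $I(G)^{[k]}$ is the ideal generated by all products $e_1\cdots e_k$ over $k$-matchings of $G$; $I(G)^{[1]}=I(G)$ is the edge ideal. $\nu(G)$ is the matching number. *)

From HB Require Import structures.
From mathcomp Require Import all_boot all_order all_algebra.
Set Implicit Arguments. Unset Strict Implicit. Unset Printing Implicit Defensive.
Import GRing.Theory.
Local Open Scope ring_scope.

(* S = K[x_0, ..., x_{n-1}] realized as iterated univariate polynomials: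
   mpoly K 0 = K,  mpoly K (n+1) = (mpoly K n)[x_n]. *)
Fixpoint mpoly (K : fieldType) (n : nat) : comNzRingType :=
  match n with
  | 0 => K
  | n'.+1 => {poly (mpoly K n')}
  end.

Fixpoint xvar (K : fieldType) (n : nat) (i : nat) : mpoly K n :=
  match n return mpoly K n with
  | 0 => 0
  | n'.+1 => if i == n' then ('X : {poly (mpoly K n')})
             else ((xvar K n' i)%:P : {poly (mpoly K n')})
  end.

Definition simple_graph (n : nat) (e : rel 'I_n) : Prop :=
  irreflexive e /\ symmetric e.

Definition is_matching (n : nat) (e : rel 'I_n) (M : {set 'I_n * 'I_n}) : bool :=
  [forall p in M, (p.1 < p.2)%N && e p.1 p.2] &&
  [forall p in M, forall q in M,
      (p != q) ==> [&& p.1 != q.1, p.1 != q.2, p.2 != q.1 & p.2 != q.2]].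

Definition matching_number (n : nat) (e : rel 'I_n) : nat :=
  \max_(M : {set 'I_n * 'I_n} | is_matching e M) #|M|.

Definition maximal_matching (n : nat) (e : rel 'I_n) (M : {set 'I_n * 'I_n}) : Prop :=
  is_matching e M /\
  forall M' : {set 'I_n * 'I_n}, is_matching e M' -> M \subset M' -> M' = M.

Definition maximum_matching (n : nat) (e : rel 'I_n) (M : {set 'I_n * 'I_n}) : Prop :=
  is_matching e M /\ #|M| = matching_number e.

Definition equimatchable (n : nat) (e : rel 'I_n) : Prop :=
  forall M, maximal_matching e M -> maximum_matching e M.

Definition matching_monomial (K : fieldType) (n : nat) (M : {set 'I_n * 'I_n})
  : mpoly K n :=
  \prod_(p in M) (xvar K n p.1 * xvar K n p.2).

(* membership in I(G)^[k]: the ideal generated by the monomials of the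
   k-matchings of G *)
Definition in_sqf_power (K : fieldType) (n : nat) (e : rel 'I_n) (k : nat)
  (f : mpoly K n) : Prop :=
  exists c : {set 'I_n * 'I_n} -> mpoly K n,
    f = \sum_(M : {set 'I_n * 'I_n} | is_matching e M && (#|M| == k))
          c M * matching_monomial K M.

Definition in_colon (K : fieldType) (n : nat) (e : rel 'I_n) (k l : nat)
  (f : mpoly K n) : Prop :=
  forall g : mpoly K n, in_sqf_power e l g -> in_sqf_power e k (f * g).

From mathcomp Require Import all_boot all_order all_algebra.
From mathcomp Require Import ring zify.
Set Implicit Arguments. Unset Strict Implicit. Unset Printing Implicit Defensive.
Import GRing.Theory.

(* [I(G)^[k]] is a monomial ideal, so it suffices to show that a monomial [x^a] of [f] whose
   support [S] carries no [k]-matching prevents [f] from lying in the colon ideal.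
   Take a maximum matching [M0] of [G] inside [S] and extend it to a maximal, hence (by
   equimatchability) maximum, matching [M].  Choosing an [l]-matching [N] between [M0] and
   the edges of [M] meeting [S], or between those edges and [M], one checks that [S]
   together with the vertices of [N] still carries no [k]-matching.  Then [x^a x_N] is a
   monomial of [f x_N] not divisible by any [k]-matching monomial, so [f x_N] is not in
   [I(G)^[k]] although [x_N] is in [I(G)^[l]]. *)

Section Monomials.
Local Open Scope ring_scope.
Variable K : fieldType.
Implicit Types a b : nat -> nat.

(* Exponent vectors are functions [nat -> nat]; only the values below [n] matter. *)
Fixpoint coefm n : mpoly K n -> (nat -> nat) -> K :=
  match n return mpoly K n -> (nat -> nat) -> K with
  | 0 => fun f _ => f
  | n'.+1 => fun f a => coefm (n := n') ((f : {poly mpoly K n'})`_(a n')) a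
  end.

Fixpoint monomial n a : mpoly K n :=
  match n return mpoly K n with
  | 0 => 1
  | n'.+1 => ((monomial n' a)%:P * 'X^(a n') : {poly mpoly K n'})
  end.

Fixpoint mconst n (c : K) : mpoly K n :=
  match n return mpoly K n with
  | 0 => c
  | n'.+1 => ((mconst n' c)%:P : {poly mpoly K n'})
  end.

Lemma coefm0 n a : coefm (0 : mpoly K n) a = 0.
Proof. by elim: n => [//|n IH] /=; rewrite coef0 IH. Qed.

Lemma coefmD n (f g : mpoly K n) a : coefm (f + g) a = coefm f a + coefm g a.
Proof. by elim: n f g => [//|n IH] f g /=; rewrite coefD IH. Qed.

Lemma coefm_sum n (I : Type) (r : seq I) (P : pred I) (F : I -> mpoly K n) a :
  coefm (\sum_(i <- r | P i) F i) a = \sum_(i <- r | P i) coefm (F i) a.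
Proof.
by apply: (big_morph (fun f => coefm f a)) => [f g|]; rewrite ?coefmD ?coefm0.
Qed.

Lemma eq_coefm n (f : mpoly K n) a b :
  (forall j, (j < n)%N -> a j = b j) -> coefm f a = coefm f b.
Proof.
elim: n f => [//|n IH] f eq_ab /=.
by rewrite eq_ab // IH // => j /ltnW; apply: eq_ab.
Qed.

Lemma eq_monomial n a b :
  (forall j, (j < n)%N -> a j = b j) -> monomial n a = monomial n b.
Proof.
elim: n => [//|n IH] eq_ab /=.
by rewrite eq_ab // IH // => j /ltnW; apply: eq_ab.
Qed.

Lemma monomial0 n : monomial n (fun _ => 0%N) = 1.
Proof. by elim: n => [//|n IH] /=; rewrite IH expr0 mulr1. Qed.

Lemma monomialD n a b : monomial n (fun j => a j + b j)%N = monomial n a * monomial n b.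
Proof.
elim: n => [|n IH] /=; first by rewrite mulr1.
by rewrite IH polyCM exprD; ring.
Qed.

Lemma monomial_prod n (I : Type) (r : seq I) (P : pred I) (a : I -> nat -> nat) :
  \prod_(i <- r | P i) monomial n (a i) =
  monomial n (fun j => \sum_(i <- r | P i) a i j)%N.
Proof.
elim: r => [|i r IH].
  by rewrite big_nil -(monomial0 n); apply: eq_monomial => j _; rewrite big_nil.
rewrite big_cons IH; case: ifP => Pi; rewrite -?monomialD;
  by apply: eq_monomial => j _; rewrite big_cons Pi.
Qed.

Lemma xvar_monomial n i : (i < n)%N -> xvar K n i = monomial n (fun j => (j == i) : nat).
Proof.
elim: n => [//|n IH] lt_in /=; case: eqP => [->|/eqP ne_in].
  rewrite eqxx expr1 (@eq_monomial n _ (fun _ => 0%N)) ?monomial0 ?mul1r //.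
  by move=> j lt_jn; rewrite (ltn_eqF lt_jn).
rewrite eq_sym (negbTE ne_in) expr0 mulr1 IH //.
by move: lt_in; rewrite ltnS leq_eqVlt (negbTE ne_in).
Qed.

Lemma coefm_mul_monomial n (f : mpoly K n) a b :
  (forall j, (j < n)%N -> b j <= a j)%N ->
  coefm (f * monomial n b) a = coefm f (fun j => a j - b j)%N.
Proof.
elim: n f => [|n IH] f le_ba /=; first by rewrite mulr1.
rewrite mulrA coefMXn ltnNge le_ba //= coefMC.
by rewrite IH // => j /ltnW; apply: le_ba.
Qed.

Lemma coefm_mul_monomial_neq0 n (f : mpoly K n) a b :
  coefm (f * monomial n b) a != 0 -> forall j, (j < n)%N -> (b j <= a j)%N.
Proof.
elim: n f => [//|n IH] f /=.
rewrite mulrA coefMXn; case: ltnP => [_|le_ba]; first by rewrite coefm0 eqxx.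
rewrite coefMC => /IH le_ba' j; rewrite ltnS leq_eqVlt.
by case/orP => [/eqP -> //|]; apply: le_ba'.
Qed.

Lemma coefm_ind n (P : (nat -> nat) -> Prop) (Q : mpoly K n -> Prop) :
  Q 0 -> (forall f g, Q f -> Q g -> Q (f + g)) ->
  (forall c a, P a -> Q (mconst n c * monomial n a)) ->
  forall f, (forall a, coefm f a != 0 -> P a) -> Q f.
Proof.
elim: n P Q => [|n IH] P Q Q0 QD Qmon f Pf.
  have [->|nz_f] := eqVneq f 0; first exact: Q0.
  by rewrite -[f]mulr1; apply: (Qmon f (fun _ => 0%N)); apply: Pf.
rewrite -[f]coefK poly_def; apply: (big_ind Q Q0 QD) => i _.
pose ai a j : nat := if j == n then nat_of_ord i else a j.
rewrite -mul_polyC; apply: (IH (fun a => P (ai a)) (fun g => Q (g%:P * 'X^i))).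
- by rewrite mul0r.
- by move=> g h Qg Qh; rewrite polyCD mulrDl; apply: QD.
- move=> c a Pa; rewrite polyCM -mulrA.
  have -> : (monomial n a)%:P * 'X^i = monomial n.+1 (ai a).
    rewrite /= /ai eqxx (@eq_monomial n _ a) // => j lt_jn.
    by rewrite (ltn_eqF lt_jn).
  exact: Qmon.
- move=> a nz; apply: Pf => /=; rewrite /ai eqxx (@eq_coefm n _ _ a) // => j lt_jn.
  by rewrite (ltn_eqF lt_jn).
Qed.

End Monomials.

Lemma subset_card_between (T : finType) (B A : {set T}) m :
  B \subset A -> (#|B| <= m <= #|A|)%N ->
  exists N : {set T}, [/\ B \subset N, N \subset A & #|N| = m].
Proof.
move=> sBA /andP [le_Bm]; rewrite -(subnKC le_Bm).
elim: (m - #|B|)%N => [|d IH] le_dA; first by exists B; rewrite addn0.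
rewrite addnS in le_dA; have [N [sBN sNA cardN]] := IH (ltnW le_dA).
have : (0 < #|A :\: N|)%N by rewrite cardsDS //; lia.
case/card_gt0P => x /setDP [xA xN]; exists (x |: N); split.
- exact: subset_trans sBN (subsetUr _ _).
- by rewrite subUset sub1set xA.
- by rewrite cardsU1 xN cardN addnS.
Qed.

Section Matchings.
Variables (n : nat) (e : rel 'I_n).
Implicit Types (M N L : {set 'I_n * 'I_n}) (S X : {set 'I_n}) (p q : 'I_n * 'I_n).

Definition vertex_disjoint p q : bool :=
  [&& p.1 != q.1, p.1 != q.2, p.2 != q.1 & p.2 != q.2].

Definition touches S p : bool := (p.1 \in S) || (p.2 \in S).

Definition covered M : {set 'I_n} :=
  [set v | [exists p in M, (p.1 == v) || (p.2 == v)]].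

Definition has_matching_in k S : bool :=
  [exists M, [&& is_matching e M, #|M| == k & covered M \subset S]].

Lemma matching_edge M p : is_matching e M -> p \in M -> (p.1 < p.2)%N && e p.1 p.2.
Proof. by case/andP => /forall_inP edgeM _ /edgeM. Qed.

Lemma matching_disjoint M p q :
  is_matching e M -> p \in M -> q \in M -> p != q -> vertex_disjoint p q.
Proof. by case/andP => _ /forall_inP disjM /disjM /forall_inP dp /dp /implyP. Qed.

Lemma matchingI M :
  (forall p, p \in M -> (p.1 < p.2)%N && e p.1 p.2) ->
  (forall p q, p \in M -> q \in M -> p != q -> vertex_disjoint p q) ->
  is_matching e M.
Proof.
move=> edgeM disjM; apply/andP; split; apply/forall_inP => p pM; first exact: edgeM.
by apply/forall_inP => q qM; apply/implyP; apply: disjM.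
Qed.

Lemma matching_subset M N : is_matching e M -> N \subset M -> is_matching e N.
Proof.
move=> matM /subsetP sNM; apply: matchingI => [p /sNM|p q /sNM pM /sNM qM].
  exact: matching_edge matM.
exact: matching_disjoint matM pM qM.
Qed.

Lemma matching0 : is_matching e set0.
Proof. by apply: matchingI => p; rewrite inE. Qed.

Lemma coveredP M v :
  reflect (exists2 p, p \in M & (p.1 == v) || (p.2 == v)) (v \in covered M).
Proof. by rewrite inE; apply: exists_inP. Qed.

Lemma mem_covered M p : p \in M -> (p.1 \in covered M) && (p.2 \in covered M).
Proof. by move=> pM; apply/andP; split; apply/coveredP; exists p; rewrite ?eqxx ?orbT. Qed.

Lemma covered_subsetP M X :
  reflect (forall p, p \in M -> (p.1 \in X) && (p.2 \in X)) (covered M \subset X).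
Proof.
apply: (iffP subsetP) => [covX p pM|inX v /coveredP [p pM]].
  by case/andP: (mem_covered pM) => /covX -> /covX ->.
by case/andP: (inX p pM) => p1X p2X /orP [] /eqP <-.
Qed.

Lemma covered_subset M N : N \subset M -> covered N \subset covered M.
Proof. by move=> /subsetP sNM; apply/covered_subsetP => p /sNM /mem_covered. Qed.

Lemma vertex_disjoint_sym p q : vertex_disjoint p q = vertex_disjoint q p.
Proof.
by rewrite /vertex_disjoint !(eq_sym q.1) !(eq_sym q.2); case: (p.1 != q.2); case: (p.2 != q.1).
Qed.

Lemma vertex_disjoint_endpoints p q x y : vertex_disjoint p q ->
  (p.1 == x) || (p.2 == x) -> (q.1 == y) || (q.2 == y) -> x != y.
Proof. by case/and4P => ? ? ? ? /orP [] /eqP <- /orP [] /eqP <-. Qed.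

Lemma matchingU M N :
  is_matching e M -> is_matching e N -> [disjoint covered M & covered N] ->
  is_matching e (M :|: N).
Proof.
move=> matM matN disjMN.
have sep p q : p \in M -> q \in N -> vertex_disjoint p q.
  move=> pM qN; case/andP: (mem_covered pM) => p1M p2M.
  case/andP: (mem_covered qN) => q1N q2N.
  have [p1N p2N] := (disjointFr disjMN p1M, disjointFr disjMN p2M).
  by apply/and4P; split; [apply: contraFneq p1N|apply: contraFneq p1N|
    apply: contraFneq p2N|apply: contraFneq p2N] => ->.
apply: matchingI => [p|p q]; rewrite !inE.
  by case/orP; [apply: matching_edge matM|apply: matching_edge matN].
case/orP => [pM|pN] /orP [qM|qN] neq_pq.
- exact: matching_disjoint matM pM qM neq_pq.
- exact: sep.
- by rewrite vertex_disjoint_sym; apply: sep.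
- exact: matching_disjoint matN pN qN neq_pq.
Qed.

Lemma disjoint_covered M N : [disjoint covered M & covered N] -> [disjoint M & N].
Proof.
move=> disjMN; rewrite disjoints_subset; apply/subsetP => p pM; rewrite inE.
apply/negP => /mem_covered /andP [p1N _].
by case/andP: (mem_covered pM) => /(disjointFr disjMN); rewrite p1N.
Qed.

Lemma has_matching_inPn k S :
  reflect (forall L, is_matching e L -> covered L \subset S -> (#|L| < k)%N)
          (~~ has_matching_in k S).
Proof.
apply: (iffP negP) => [no_k L matL covL|small /existsP [M /and3P [matM /eqP cardM covM]]].
  rewrite ltnNge; apply/negP => le_kL; apply: no_k.
  have [N [_ sNL cardN]] : exists N, [/\ set0 \subset N, N \subset L & #|N| = k].
    by apply: subset_card_between; rewrite ?sub0set ?cards0.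
  apply/existsP; exists N; rewrite (matching_subset matL sNL) cardN eqxx /=.
  exact: subset_trans (covered_subset sNL) covL.
by have := small M matM covM; rewrite cardM ltnn.
Qed.

Lemma maximal_matching_ext B :
  is_matching e B -> exists2 M, maximal_matching e M & B \subset M.
Proof.
move=> matB; have PB : is_matching e B && (B \subset B) by rewrite matB subxx.
case: (@arg_maxnP _ B [pred M | is_matching e M & B \subset M] (fun M => #|M|) PB)
  => M /andP [matM sBM] maxM.
exists M => //; split => // M' matM' sMM'.
apply/eqP; rewrite eq_sym eqEcard sMM'; apply: maxM.
by rewrite inE matM' (subset_trans sBM sMM').
Qed.

Definition inside S : {set 'I_n * 'I_n} := [set p | (p.1 \in S) && (p.2 \in S)].

Definition outer_end S p : 'I_n := if p.1 \in S then p.2 else p.1.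

Lemma outer_end_endpoint S p : (p.1 == outer_end S p) || (p.2 == outer_end S p).
Proof. by rewrite /outer_end; case: ifP; rewrite eqxx ?orbT. Qed.

Lemma card_leaving_edges S L :
  is_matching e L -> (#|L :\: inside S| <= #|covered L :\: S|)%N.
Proof.
move=> matL; have inj : {in L :\: inside S &, injective (outer_end S)}.
  move=> p q /setDP [pL _] /setDP [qL _] eq_end; apply/eqP; apply: contraTT isT => neq_pq.
  have := vertex_disjoint_endpoints (matching_disjoint matL pL qL neq_pq).
  by move=> /(_ _ _ (outer_end_endpoint S p) (outer_end_endpoint S q)); rewrite eq_end eqxx.
rewrite -(card_in_imset inj); apply/subset_leq_card/subsetP => _ /imsetP [p /setDP [pL pNS] ->].
apply/setDP; split; first by apply/coveredP; exists p; rewrite // outer_end_endpoint.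
by move: pNS; rewrite inE /outer_end; case: ifP => [//|/negbT].
Qed.

Lemma card_covered_leaving S M0 N :
  {in N, forall p, touches S p} -> M0 \subset N -> covered M0 \subset S ->
  (#|covered N :\: S| <= #|N :\: M0|)%N.
Proof.
move=> touchN sM0N /covered_subsetP inM0.
apply: leq_trans (leq_imset_card (outer_end S) _); apply/subset_leq_card/subsetP.
move=> v /setDP [/coveredP [q qN qv] vNS]; apply/imsetP; exists q.
  apply/setDP; split => //; apply: contraNN vNS => /inM0 /andP [q1S q2S].
  by case/orP: qv => /eqP <-.
rewrite /outer_end; case/orP: qv => /eqP qv; rewrite -qv in vNS *.
  by rewrite (negbTE vNS).
by have := touchN q qN; rewrite /touches (negbTE vNS) orbF => ->.
Qed.

(* Edges of [L] inside [S] are beaten by [M0]; every other edge of [L] has an endpoint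
   in [covered N :\: S], and [N] contributes at most one such vertex per edge outside [M0]. *)
Lemma matching_bound_touching S M0 N L :
  is_matching e L -> covered L \subset S :|: covered N ->
  {in N, forall p, touches S p} -> M0 \subset N -> covered M0 \subset S ->
  (forall L', is_matching e L' -> covered L' \subset S -> #|L'| <= #|M0|)%N ->
  (#|L| <= #|N|)%N.
Proof.
move=> matL covL touchN sM0N covM0 maxM0.
have le_in : (#|L :&: inside S| <= #|M0|)%N.
  apply: maxM0; first exact: matching_subset matL (subsetIl _ _).
  by apply/covered_subsetP => p; rewrite !inE => /andP [].
have le_out : (#|L :\: inside S| <= #|N| - #|M0|)%N.
  rewrite -(cardsDS sM0N); apply: leq_trans (card_leaving_edges S matL) _.
  apply: leq_trans (card_covered_leaving touchN sM0N covM0).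
  by apply/subset_leq_card; rewrite -[covered N :\: S]set0U -(setDv S) -setDUl setSD.
have := subset_leq_card sM0N; rewrite -(cardsID (inside S) L); lia.
Qed.

(* The edges of [M] outside [N] avoid [S :|: covered N], so they extend [L] to a
   matching, whose size is then at most the matching number [#|M|]. *)
Lemma matching_bound_equimatchable S M N L :
  equimatchable e -> is_matching e M -> #|M| = matching_number e ->
  N \subset M -> {in M, forall p, touches S p -> p \in N} ->
  is_matching e L -> covered L \subset S :|: covered N -> (#|L| <= #|N|)%N.
Proof.
move=> equi matM cardM sNM touchN matL covL.
have avoid : [disjoint covered (M :\: N) & S :|: covered N].
  rewrite disjoints_subset; apply/subsetP => v /coveredP [q /setDP [qM qN] qv].

  rewrite in_setC in_setU negb_or; apply/andP; split.
    apply: contraNN qN => vS; apply: touchN => //.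
    by rewrite /touches; case/orP: qv => /eqP ->; rewrite vS ?orbT.
  apply/negP => /coveredP [r rN rv]; have neq_qr : q != r by apply: contraNneq qN => ->.
  have := vertex_disjoint_endpoints (matching_disjoint matM qM (subsetP sNM r rN) neq_qr) qv rv.
  by rewrite eqxx.
have disjL : [disjoint covered L & covered (M :\: N)].
  by rewrite disjoint_sym; apply: disjointWr covL avoid.
have matU := matchingU matL (matching_subset matM (subsetDl M N)) disjL.
have [M' /equi [_ cardM'] sUM'] := maximal_matching_ext matU.
have := subset_leq_card sUM'; have := subset_leq_card sNM.
rewrite cardM' -cardM cardsU (disjoint_setI0 (disjoint_covered disjL)) cards0 cardsDS //.
lia.
Qed.

Lemma matching_avoiding_extension S k l :
  equimatchable e -> (l < k)%N -> (k <= matching_number e)%N ->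
  ~~ has_matching_in k S ->
  exists N, [/\ is_matching e N, #|N| = l & ~~ has_matching_in k (S :|: covered N)].
Proof.
move=> equi lt_lk le_k_nu /has_matching_inPn smallS.
have P0 : is_matching e set0 && (covered set0 \subset S).
  by rewrite matching0; apply/covered_subsetP => p; rewrite inE.
case: (@arg_maxnP _ set0 [pred M | is_matching e M & covered M \subset S] (fun M => #|M|) P0)
  => M0 /andP [matM0 covM0] maxM0.
have {}maxM0 L : is_matching e L -> covered L \subset S -> (#|L| <= #|M0|)%N.
  by move=> matL covL; apply: maxM0; rewrite inE matL.
have [M /[dup] maxM /equi [matM cardM] sM0M] := maximal_matching_ext matM0.
pose A := [set p in M | touches S p].
have sM0A : M0 \subset A.
  apply/subsetP => p pM0; rewrite inE (subsetP sM0M p pM0) /touches.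
  by case/andP: (covered_subsetP _ _ covM0 p pM0) => ->.
have sAM : A \subset M by apply/subsetP => p; rewrite inE => /andP [].
have small_l X N : (forall L, is_matching e L -> covered L \subset X -> #|L| <= #|N|)%N ->
  #|N| = l -> ~~ has_matching_in k X.
  move=> bound cardN; apply/has_matching_inPn => L matL covL.
  by rewrite (leq_ltn_trans (bound L matL covL)) ?cardN.
case: (leqP l #|A|) => [le_lA|lt_Al]; first case: (leqP l #|M0|) => [le_lM0|lt_M0l].
- have [N [_ sNM0 cardN]] : exists N, [/\ set0 \subset N, N \subset M0 & #|N| = l].
    by apply: subset_card_between; rewrite ?sub0set ?cards0.
  exists N; split => //; first exact: matching_subset matM0 sNM0.
  suff -> : S :|: covered N = S by apply/has_matching_inPn.
  by apply/setUidPl; apply: subset_trans (covered_subset sNM0) covM0.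
- have [N [sM0N sNA cardN]] : exists N, [/\ M0 \subset N, N \subset A & #|N| = l].
    by apply: subset_card_between => //; rewrite le_lA andbT ltnW.
  exists N; split => //; first exact: matching_subset matM (subset_trans sNA sAM).
  apply: small_l cardN => L matL covL.
  have touchN : {in N, forall p, touches S p}.
    by move=> p /(subsetP sNA); rewrite inE => /andP [].
  exact: matching_bound_touching matL covL touchN sM0N covM0 maxM0.
- have [N [sAN sNM cardN]] : exists N, [/\ A \subset N, N \subset M & #|N| = l].
    apply: subset_card_between => //; rewrite ltnW //= cardM.
    exact: leq_trans (ltnW lt_lk) le_k_nu.
  exists N; split => //; first exact: matching_subset matM sNM.
  apply: small_l cardN => L matL covL.
  have touchN : {in M, forall p, touches S p -> p \in N}.
    by move=> p pM touch_p; apply: (subsetP sAN); rewrite inE pM.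
  exact: matching_bound_equimatchable equi matM cardM sNM touchN matL covL.
Qed.

End Matchings.

Section SquarefreePowers.
Local Open Scope ring_scope.
Variables (K : fieldType) (n : nat) (e : rel 'I_n).
Implicit Types (M N : {set 'I_n * 'I_n}) (a b : nat -> nat) (f g : mpoly K n).

Definition mdeg M (j : nat) : nat :=
  \sum_(p in M) ((j == p.1) + (j == p.2))%N.

Definition supp a : {set 'I_n} := [set v : 'I_n | (0 < a v)%N].

Lemma matching_monomialE M : matching_monomial K M = monomial K n (mdeg M).
Proof.
rewrite /matching_monomial (eq_bigr (fun p : 'I_n * 'I_n => monomial K n (fun j =>
  (j == p.1) + (j == p.2))%N)) ?monomial_prod // => p _.
by rewrite !xvar_monomial // -monomialD.
Qed.

Lemma mdeg_gt0 M (v : 'I_n) : (0 < mdeg M v)%N = (v \in covered M).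
Proof.
have ends (p : 'I_n * 'I_n) :
    ~~ ((p \in M) ==> ((v == p.1 :> nat) + (v == p.2 :> nat) == 0)%N) =
    (p \in M) && ((p.1 == v) || (p.2 == v)).
  by rewrite negb_imply addn_eq0 negb_and !eqb0 !negbK !(eq_sym (val v)) !(inj_eq val_inj).
rewrite lt0n sum_nat_eq0 negb_forall; apply/existsP/coveredP => [[p]|[p pM pv]].
  by rewrite ends => /andP [pM pv]; exists p.
by exists p; rewrite ends pM.
Qed.

Lemma matching_mdeg_le1 M (v : 'I_n) : is_matching e M -> (mdeg M v <= 1)%N.
Proof.
move=> matM; have ends p : p \in M ->
    ((v == p.1 :> nat) + (v == p.2 :> nat))%N = ((p.1 == v) || (p.2 == v)).
  move=> pM; case/andP: (matching_edge matM pM) => lt12 _.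
  rewrite !(eq_sym (val v)) !(inj_eq val_inj).
  by case: (p.1 =P v) => [<-|_]; rewrite // -(inj_eq val_inj) gtn_eqF.
case: (boolP [exists p in M, (p.1 == v) || (p.2 == v)]) => [/exists_inP [p pM pv]|none].
  rewrite /mdeg (bigD1 p) //= ends // pv big1 // => q /andP [qM neq_qp].
  rewrite ends //; apply/eqP; rewrite eqb0; apply/negP => qv.
  by have := vertex_disjoint_endpoints (matching_disjoint matM qM pM neq_qp) qv pv; rewrite eqxx.
rewrite /mdeg big1 // => p pM; rewrite ends //; apply/eqP; rewrite eqb0.
by apply: contra none => pv; apply/exists_inP; exists p.
Qed.

Lemma supp_add_mdeg a N : supp (fun j => a j + mdeg N j)%N = supp a :|: covered N.
Proof. by apply/setP => v; rewrite in_setU -mdeg_gt0 /supp !in_set addn_gt0. Qed.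

Lemma in_sqf_power0 k : in_sqf_power e k (0 : mpoly K n).
Proof. by exists (fun _ => 0); rewrite big1 // => M _; rewrite mul0r. Qed.

Lemma in_sqf_powerD k f g :
  in_sqf_power e k f -> in_sqf_power e k g -> in_sqf_power e k (f + g).
Proof.
move=> [c ->] [d ->]; exists (fun M => c M + d M).
by rewrite -big_split; apply: eq_bigr => M _; rewrite mulrDl.
Qed.

Lemma in_sqf_powerMr k f g : in_sqf_power e k f -> in_sqf_power e k (f * g).
Proof.
move=> [c ->]; exists (fun M => c M * g).
by rewrite mulr_suml; apply: eq_bigr => M _; rewrite mulrAC.
Qed.

Lemma in_sqf_power_matching k M g :
  is_matching e M -> #|M| = k -> in_sqf_power e k (g * matching_monomial K M).
Proof.
move=> matM cardM; exists (fun M' => if M' == M then g else 0).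
rewrite (bigD1 M) /=; last by rewrite matM cardM eqxx.
by rewrite eqxx big1 ?addr0 // => M' /andP [_ /negbTE ->]; rewrite mul0r.
Qed.

Lemma in_sqf_power_monomial k c a :
  has_matching_in e k (supp a) -> in_sqf_power e k (mconst n c * monomial K n a).
Proof.
case/existsP => M /and3P [matM /eqP cardM covM].
have le_deg j : (j < n)%N -> (mdeg M j <= a j)%N.
  move=> lt_jn; pose v := Ordinal lt_jn.
  have := matching_mdeg_le1 v matM; case: (posnP (mdeg M v)) => [-> //|deg_pos le1].
  have : v \in supp a by rewrite (subsetP covM) // -mdeg_gt0.
  by rewrite inE; apply: leq_trans le1.
rewrite -(@eq_monomial _ n (fun j => a j - mdeg M j + mdeg M j)%N) => [|j lt_jn].
  by rewrite monomialD -matching_monomialE mulrA; apply: in_sqf_power_matching.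
by rewrite subnK ?le_deg.
Qed.

Lemma in_sqf_power_coefm k g b :
  in_sqf_power e k g -> coefm g b != 0 -> has_matching_in e k (supp b).
Proof.
case=> c ->; rewrite coefm_sum => nz.
have /existsP [M /andP [/andP [matM cardM] nzM]] : [exists M,
    (is_matching e M && (#|M| == k)) && (coefm (c M * matching_monomial K M) b != 0)].
  apply: contraNT nz => /existsPn none; rewrite big1 // => M PM.
  by move: (none M); rewrite PM negbK => /eqP.
apply/existsP; exists M; rewrite matM cardM /=; apply/subsetP => v.
rewrite -mdeg_gt0 inE => deg_pos; apply: leq_trans deg_pos _.
by move: nzM; rewrite matching_monomialE => /coefm_mul_monomial_neq0; apply.
Qed.

Lemma in_sqf_powerP k f :
  in_sqf_power e k f <-> forall a, coefm f a != 0 -> has_matching_in e k (supp a).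
Proof.
split=> [f_in a|]; first exact: in_sqf_power_coefm.
apply: (coefm_ind (P := fun a => has_matching_in e k (supp a))).
- exact: in_sqf_power0.
- exact: in_sqf_powerD.
- exact: in_sqf_power_monomial.
Qed.

End SquarefreePowers.

(* Neither [hG] (loops are already excluded by [p.1 < p.2] in [is_matching]) nor [hl] is needed. *)
Theorem corollary6p6 (K : fieldType) (n : nat) (e : rel 'I_n)
  (hG : simple_graph e) (heq : equimatchable e) (k l : nat)
  (hl : (1 <= l)%N) (hlk : (l < k)%N) (hk : (k <= matching_number e)%N) :
  forall f : mpoly K n, in_colon e k l f <-> in_sqf_power e k f.
Proof.
move=> f; split=> [f_colon|f_in g _]; last exact: in_sqf_powerMr.
apply/in_sqf_powerP => a nz_fa; apply: contraT => no_match.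
have [N [matN cardN no_matchN]] := matching_avoiding_extension heq hlk hk no_match.
have N_in : in_sqf_power e l (matching_monomial K N).
  by rewrite -[matching_monomial K N]mul1r; apply: in_sqf_power_matching.
have := in_sqf_power_coefm (f_colon _ N_in) (b := fun j => a j + mdeg N j)%N.
rewrite supp_add_mdeg (negbTE no_matchN); apply.
rewrite matching_monomialE coefm_mul_monomial => [|j _]; last exact: leq_addl.
by rewrite (@eq_coefm _ _ _ _ a) // => j _; rewrite addnK.
Qed.
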